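(* Let $(\Phi,\mathtt{Prg},\mathrm{AT})$ be a CLC SPL with $\Phi=(\mathcal F,\phi)$, let $p$ be a valid product, and let $\mathcal D$ be a derivation of $\phi\vdash\mathtt{Prg}\ \textsc{ok}$ in the family-based type system. If a judgment $\theta;\Delta\vdash e:T$ occurs in $\mathcal D$ and $p\models\theta$, then $[\![\Delta]\!]_p\vdash\langle\!\langle e\rangle\!\rangle_p:T$ is derivable in the LC type system relative to the variant program $[\![\mathtt{Prg}]\!]_p$. Moreover, there is such an LC derivation in which every struct name $s$ appearing satisfies $p\models\mathrm{AT}(\mathtt{Prg}(s))$.
   Context: **Lightweight C (LC).** Types: $T ::= \mathtt{int}\mid \mathtt{void}* \mid \mathtt{struct}\ s*$ ($s$ a struct name). Expressions: $e ::= n$ (integer literal) $\mid \mathtt{NULL}\mid x$ (parameter name) $\mid f(e_1,\dots,e_k)$ ($k\ge0$) $\mid e\texttt{->}m \mid e\texttt{->}m=e \mid e\,?\,e:e \mid (e_1,\dots,e_k)$ ($k\ge1$, a parenthesized expression sequence) $\mid \mathsf{uop}\ e\mid e\ \mathsf{bop}\ e\mid \mathtt{MALLOC}(\mathtt{struct}\ s)\mid \mathtt{MFREE}(e)$. A struct definition is $\mathtt{struct}\ s\{T_1\,m_1;\dots;T_k\,m_k;\};$ (distinct member names); a function definition is $T_0\ f(T_1\,x_1,\dots,T_k\,x_k)\{\mathtt{return}\ e;\}$ (distinct parameter names); a program $\mathtt{Prg}=\overline{SD}\ \overline{FD}$ is a sequence of struct definitions followed by a sequence of function definitions, with distinct struct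 names and distinct function names. $\mathtt{Prg}$ is regarded as a finite map: $\mathtt{Prg}(s)$ is the definition of struct $s$, $\mathtt{Prg}(s)(m)=$ ''$T\ m$'' is the declaration of member $m$ in it, $\mathtt{Prg}(f)$ is the definition of function $f$; $\mathrm{dom}(\overline{SD})$ is the set of defined struct names. $\mathtt{Prg}$ is *sane* if (1) every struct name occurring anywhere in $\mathtt{Prg}$ is defined in $\mathtt{Prg}$, (2) every function name occurring in the function definitions is defined in $\mathtt{Prg}$, (3) $\mathtt{Prg}(\mathtt{main})=\mathtt{int\ main}()\{\mathtt{return}\ e;\}$ for some $e$. Operator types: unary $-:(\mathtt{int})\to\mathtt{int}$; unary $!:(T)\to\mathtt{int}$ for every type $T$; binary $+,-,*,/,\&\&,||,<,<=,>,>=:(\mathtt{int},\mathtt{int})\to\mathtt{int}$; binary $==,!=:(T,T)\to\mathtt{int}$ for every type $T$. Subtyping $\le$ is the reflexive closure of $\mathtt{void}*\le\mathtt{struct}\ s*$ for every struct $s$ defined in the program; $\max_\le\{T_1,T_2\}$ is the greater of two $\le$-comparable types. LC typing (relative to the program under consideration; $\Gamma$ a finite map from parameter names to types): (T-int) $\Gamma\vdash n:\mathtt{int}$. (T-null) $\Gamma\vdash\mathtt{NULL}:\mathtt{void}*$. (T-par) if $x{:}T\in\Gamma$ then $\Gamma\vdash x:T$. (T-app) if $\mathtt{Prg}(f)=T_0\,f(T_1x_1,\dots,T_kx_k)\{\dots\}$, and $\Gamma\vdash e_i:T_i'$, $T_i'\le T_i$ for $i=1..k$ (exactly $k$ arguments),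 then $\Gamma\vdash f(e_1,\dots,e_k):T_0$. (T-member) if $\Gamma\vdash e_0:\mathtt{struct}\ s*$ and $\mathtt{Prg}(s)(m)=T\,m$ then $\Gamma\vdash e_0\texttt{->}m:T$. (T-assign) if additionally $\Gamma\vdash e_1:T_1$, $T_1\le T$, then $\Gamma\vdash e_0\texttt{->}m=e_1:T$. (T-cond) if $\Gamma\vdash e_j:T_j$ ($j=0,1,2$) and $T_3=\max_\le\{T_1,T_2\}$ then $\Gamma\vdash e_0?e_1:e_2:T_3$. (T-seq) if $\Gamma\vdash e_i:T_i$ for $i=1..n$ then $\Gamma\vdash(e_1,\dots,e_n):T_n$. (T-uop) if $\Gamma\vdash e_0:T_0$ and $\mathsf{uop}$ has type $(T_0)\to\mathtt{int}$ then $\Gamma\vdash\mathsf{uop}\,e_0:\mathtt{int}$. (T-bop) if $\Gamma\vdash e_1:T_1$, $\Gamma\vdash e_2:T_2$, $T_3=\max_\le\{T_1,T_2\}$ and $\mathsf{bop}$ has type $(T_3,T_3)\to\mathtt{int}$ then $\Gamma\vdash e_1\,\mathsf{bop}\,e_2:\mathtt{int}$. (T-malloc) if $s\in\mathrm{dom}(\overline{SD})$ then $\Gamma\vdash\mathtt{MALLOC}(\mathtt{struct}\ s):\mathtt{struct}\ s*$. (T-mfree) if $\Gamma\vdash e_0:\mathtt{struct}\ s*$ then $\Gamma\vdash\mathtt{MFREE}(e_0):\mathtt{void}*$. **Colored LC (CLC).** A feature model $\Phi=(\mathcal F,\phi)$: $\mathcal F$ a finite set of features, $\phi$ a propositional formula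 over $\mathcal F$ (connectives $!,\&\&,||$, constants $0,1$). A product is $p\subseteq\mathcal F$; $p\models\psi$ means $\psi$ is true under the assignment giving 1 to features in $p$ and 0 to the others; $p$ is valid if $p\models\phi$. For formulas, $\theta\models\theta'$ means $\theta\Rightarrow\theta'$ is valid; $\psi_1\Rightarrow\psi_2$ abbreviates $!\psi_1||\psi_2$ and $\psi_1\Leftrightarrow\psi_2$ the conjunction of both implications. An SPL is a triple $(\Phi,\mathtt{Prg},\mathrm{AT})$ with $\mathtt{Prg}$ an LC program (the code base) and $\mathrm{AT}$ an annotation table assigning a propositional formula over $\mathcal F$ to each occurrence of an annotable fragment of $\mathtt{Prg}$; annotable fragments are: each struct definition, each member declaration $T\,m$, each function definition, each formal parameter declaration $T\,x$, each argument of a function call, and each element of a parenthesized sequence. Occurrences not explicitly annotated have annotation $1$. Abbreviations: $\mathrm{AT}(s)=\mathrm{AT}(\mathtt{Prg}(s))$, $\mathrm{AT}(f)=\mathrm{AT}(\mathtt{Prg}(f))$; $\mathrm{AT}(\mathtt{int})=\mathrm{AT}(\mathtt{void}* )=1$, $\mathrm{AT}(\mathtt{struct}\ s* )=\mathrm{AT}(\mathtt{Prg}(s))$; $\exists(e_1,\dots,e_n)=\mathrm{AT}(e_1)||\cdots||\mathrm{AT}(e_n)$; $\mathtt{neverLast}(k,(e_1,\dots,e_n))=\,!\mathrm{AT}(e_k)||\mathrm{AT}(e_{k+1})||\cdots||\mathrm{AT}(e_n)$. An annotated type environment $\Delta$ maps parameter names to pairs written $x{:}T$ with $\psi$; $[\![\Delta]\!]_p$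 is the (LC) type environment $\{x{:}T \mid x{:}T\text{ with }\psi\text{ is in }\Delta,\ p\models\psi\}$. Family-based typing: (FT-prg) if $\mathtt{Prg}$ is sane, $\mathrm{AT}(\mathtt{main})=1$, $\mathtt{Prg}=\overline{SD}\,\overline{FD}$, $\phi\,\&\&\,\mathrm{AT}(SD)\vdash SD\ \textsc{ok}$ for each $SD$ in $\overline{SD}$ and $\phi\,\&\&\,\mathrm{AT}(FD)\vdash FD\ \textsc{ok}$ for each $FD$ in $\overline{FD}$, then $\phi\vdash\mathtt{Prg}\ \textsc{ok}$. (FT-struct) if $\theta\models\mathrm{AT}(T_i\,m_i)\Rightarrow\mathrm{AT}(T_i)$ for all $i$, then $\theta\vdash\mathtt{struct}\ s\{T_1m_1;\dots;T_km_k;\}\ \textsc{ok}$. (FT-fun) if $\theta\models\mathrm{AT}(T_0)$, $\theta\models\mathrm{AT}(T_i\,x_i)\Rightarrow\mathrm{AT}(T_i)$ for all $i$, $\theta;\ x_1{:}T_1\text{ with }\mathrm{AT}(T_1x_1),\dots,x_k{:}T_k\text{ with }\mathrm{AT}(T_kx_k)\vdash e:T'$ and $T'\le T_0$, then $\theta\vdash T_0\,f(T_1x_1,\dots,T_kx_k)\{\mathtt{return}\ e;\}\ \textsc{ok}$. (FT-int) $\theta;\Delta\vdash n:\mathtt{int}$. (FT-null) $\theta;\Delta\vdash\mathtt{NULL}:\mathtt{void}*$. (FT-par) if $x{:}T$ with $\psi$ is in $\Delta$ and $\theta\models\psi$ then $\theta;\Delta\vdash x:T$. (FT-app) if $\mathtt{Prg}(f)=T_0\,f(T_1x_1,\dots,T_kx_k)\{\dots\}$,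 $\theta\models\mathrm{AT}(\mathtt{Prg}(f))$, and for $i=1..k$ (exactly $k$ arguments) $\theta;\Delta\vdash e_i:T_i'$, $T_i'\le T_i$ and $\theta\models\mathrm{AT}(e_i)\Leftrightarrow\mathrm{AT}(T_ix_i)$, then $\theta;\Delta\vdash f(e_1,\dots,e_k):T_0$. (FT-member) if $\theta;\Delta\vdash e_0:\mathtt{struct}\ s*$, $\mathtt{Prg}(s)(m)=T\,m$ and $\theta\models\mathrm{AT}(T\,m)$ then $\theta;\Delta\vdash e_0\texttt{->}m:T$. (FT-assign) if additionally $\theta;\Delta\vdash e_1:T_1$ and $T_1\le T$ then $\theta;\Delta\vdash e_0\texttt{->}m=e_1:T$. (FT-cond), (FT-uop), (FT-bop), (FT-mfree): as T-cond, T-uop, T-bop, T-mfree with every judgment $\Gamma\vdash$ replaced by $\theta;\Delta\vdash$. (FT-seq) if $\theta\models\exists(e_1,\dots,e_n)$, $\theta\,\&\&\,\mathrm{AT}(e_i);\Delta\vdash e_i:T_i$ for all $i$, $T=T_n$, and $\theta\models\mathtt{neverLast}(i,(e_1,\dots,e_n))$ for every $i$ with $T_i\ne T$, then $\theta;\Delta\vdash(e_1,\dots,e_n):T$. (FT-malloc) if $s\in\mathrm{dom}(\overline{SD})$ and $\theta\models\mathrm{AT}(\mathtt{Prg}(s))$ then $\theta;\Delta\vdash\mathtt{MALLOC}(\mathtt{struct}\ s):\mathtt{struct}\ s*$. **Variant generation.** For a product $p$ and a sequence of annotable occurrences: $[\![\,]\!]_p$ is empty; $[\![a_1\dots a_n]\!]_p=\langle\!\langle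 a_1\rangle\!\rangle_p\,[\![a_2\dots a_n]\!]_p$ if $p\models\mathrm{AT}(a_1)$, and $=[\![a_2\dots a_n]\!]_p$ otherwise. $\langle\!\langle\mathtt{struct}\ s\{\overline{T\,m};\}\rangle\!\rangle_p=\mathtt{struct}\ s\{[\![\overline{T\,m}]\!]_p\}$; $\langle\!\langle T_0f(\overline{T\,x})\{\mathtt{return}\ e;\}\rangle\!\rangle_p=T_0f([\![\overline{T\,x}]\!]_p)\{\mathtt{return}\ \langle\!\langle e\rangle\!\rangle_p;\}$; $\langle\!\langle T\,m\rangle\!\rangle_p=T\,m$, $\langle\!\langle T\,x\rangle\!\rangle_p=T\,x$; $\langle\!\langle f(\bar e)\rangle\!\rangle_p=f([\![\bar e]\!]_p)$; $\langle\!\langle(\tilde e)\rangle\!\rangle_p=([\![\tilde e]\!]_p)$; on all other expression forms $\langle\!\langle\cdot\rangle\!\rangle_p$ acts homomorphically on immediate subexpressions ($n$, $\mathtt{NULL}$, $x$, $\mathtt{MALLOC}(\mathtt{struct}\ s)$ unchanged). The variant is $[\![\mathtt{Prg}]\!]_p=[\![\overline{SD}]\!]_p\,[\![\overline{FD}]\!]_p$ for $\mathtt{Prg}=\overline{SD}\,\overline{FD}$. *)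

From Stdlib Require Import String ZArith.
From Stdlib Require List.
From mathcomp Require Import all_boot.

Set Implicit Arguments.
Unset Strict Implicit.
Unset Printing Implicit Defensive.

Inductive typ : Type := Tint | Tvoid | Tstruct (s : string).

Inductive uop : Type := UNeg | UNot.
Inductive bop : Type :=
  BAdd | BSub | BMul | BDiv | BAnd | BOr | BLt | BLe | BGt | BGe | BEq | BNe.

Inductive exp : Type :=
| ENum (n : Z)
| ENull
| EVar (x : string)
| EApp (f : string) (args : list exp)
| EMember (e : exp) (m : string)
| EAssign (e : exp) (m : string) (e1 : exp)
| ECond (e0 e1 e2 : exp)
| ESeq (es : list exp)
| EUop (u : uop) (e : exp)
| EBop (b : bop) (e1 e2 : exp)
| EMalloc (s : string)
| EMfree (e : exp).

Record sdef := SDef { sd_name : string; sd_members : list (typ * string) }.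
Record fdef := FDef { fd_ret : typ; fd_name : string;
                      fd_params : list (typ * string); fd_body : exp }.
Record lprog := LProg { lp_structs : list sdef; lp_funs : list fdef }.

Fixpoint find_struct (l : list sdef) (s : string) : option sdef :=
  match l with
  | [::] => None
  | sd :: l' => if String.eqb (sd_name sd) s then Some sd else find_struct l' s
  end.

Fixpoint find_member (l : list (typ * string)) (m : string) : option typ :=
  match l with
  | [::] => None
  | (T, m') :: l' => if String.eqb m' m then Some T else find_member l' m
  end.

Fixpoint find_fun (l : list fdef) (f : string) : option fdef :=
  match l with
  | [::] => None
  | fd :: l' => if String.eqb (fd_name fd) f then Some fd else find_fun l' f
  end.

Definition struct_defined (P : lprog) (s : string) : Prop :=
  exists sd, find_struct (lp_structs P) s = Some sd.

(* Subtyping: reflexive closure of void* <= struct s* for every struct s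
   defined in the program (given by the predicate [def]). *)
Definition subty (def : string -> Prop) (T1 T2 : typ) : Prop :=
  T1 = T2 \/ (T1 = Tvoid /\ exists s, T2 = Tstruct s /\ def s).

Definition tmax (def : string -> Prop) (T1 T2 T3 : typ) : Prop :=
  (subty def T1 T2 /\ T3 = T2) \/ (subty def T2 T1 /\ T3 = T1).

Definition uop_ty (u : uop) (T0 : typ) : Prop :=
  match u with UNeg => T0 = Tint | UNot => True end.
Definition bop_ty (b : bop) (T3 : typ) : Prop :=
  match b with BEq | BNe => True | _ => T3 = Tint end.

Definition okT (ok : string -> Prop) (T : typ) : Prop :=
  match T with Tstruct s => ok s | _ => True end.

(* The extra parameter
   [ok] restricts the struct names that may appear in the derivation
   (in every judged type and every formal-parameter type used);
   with [ok := fun _ => True] this is exactly the LC type system. *)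
Inductive lc_ty (P : lprog) (G : list (string * typ)) (ok : string -> Prop)
  : exp -> typ -> Prop :=
| T_int n : lc_ty P G ok (ENum n) Tint
| T_null : lc_ty P G ok ENull Tvoid
| T_par x T : List.In (x, T) G -> okT ok T -> lc_ty P G ok (EVar x) T
| T_app f es fd Ts :
    find_fun (lp_funs P) f = Some fd ->
    List.Forall2 (lc_ty P G ok) es Ts ->
    List.Forall2 (subty (struct_defined P)) Ts (map fst (fd_params fd)) ->
    List.Forall (okT ok) (map fst (fd_params fd)) ->
    okT ok (fd_ret fd) ->
    lc_ty P G ok (EApp f es) (fd_ret fd)
| T_member e0 s m T sd :
    lc_ty P G ok e0 (Tstruct s) ->
    find_struct (lp_structs P) s = Some sd ->
    find_member (sd_members sd) m = Some T ->
    okT ok T ->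
    lc_ty P G ok (EMember e0 m) T
| T_assign e0 s m e1 T T1 sd :
    lc_ty P G ok e0 (Tstruct s) ->
    find_struct (lp_structs P) s = Some sd ->
    find_member (sd_members sd) m = Some T ->
    lc_ty P G ok e1 T1 ->
    subty (struct_defined P) T1 T ->
    okT ok T ->
    lc_ty P G ok (EAssign e0 m e1) T
| T_cond e0 e1 e2 T0 T1 T2 T3 :
    lc_ty P G ok e0 T0 -> lc_ty P G ok e1 T1 -> lc_ty P G ok e2 T2 ->
    tmax (struct_defined P) T1 T2 T3 -> okT ok T3 ->
    lc_ty P G ok (ECond e0 e1 e2) T3
| T_seq es Ts T :
    List.Forall2 (lc_ty P G ok) es (rcons Ts T) ->
    okT ok T ->
    lc_ty P G ok (ESeq es) T
| T_uop u e0 T0 :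
    lc_ty P G ok e0 T0 -> uop_ty u T0 -> lc_ty P G ok (EUop u e0) Tint
| T_bop b e1 e2 T1 T2 T3 :
    lc_ty P G ok e1 T1 -> lc_ty P G ok e2 T2 ->
    tmax (struct_defined P) T1 T2 T3 -> bop_ty b T3 ->
    lc_ty P G ok (EBop b e1 e2) Tint
| T_malloc s :
    struct_defined P s -> ok s -> lc_ty P G ok (EMalloc s) (Tstruct s)
| T_mfree e0 s :
    lc_ty P G ok e0 (Tstruct s) -> lc_ty P G ok (EMfree e0) Tvoid.

Section CLC.
Variable F : finType.

Inductive formula : Type :=
| FVar (f : F) | FTrue | FFalse
| FNot (a : formula) | FAnd (a b : formula) | FOr (a b : formula).

Fixpoint eval (p : {set F}) (a : formula) : bool :=
  match a with
  | FVar f => f \in p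
  | FTrue => true
  | FFalse => false
  | FNot a => ~~ eval p a
  | FAnd a b => eval p a && eval p b
  | FOr a b => eval p a || eval p b
  end.

Definition entails (a b : formula) : Prop :=
  forall p : {set F}, eval p a -> eval p b.

Definition fimp (a b : formula) := FOr (FNot a) b.
Definition fiff (a b : formula) := FAnd (fimp a b) (fimp b a).
Definition fors (l : list formula) : formula := foldr FOr FFalse l.

(* Annotations are stored in the syntax tree: each annotable occurrence
   carries its formula (unannotated occurrences carry FTrue). *)
Inductive cexp : Type :=
| CNum (n : Z)
| CNull
| CVar (x : string)
| CApp (f : string) (args : list (formula * cexp))
| CMember (e : cexp) (m : string)
| CAssign (e : cexp) (m : string) (e1 : cexp)
| CCond (e0 e1 e2 : cexp)
| CSeq (es : list (formula * cexp))
| CUop (u : uop) (e : cexp)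
| CBop (b : bop) (e1 e2 : cexp)
| CMalloc (s : string)
| CMfree (e : cexp).

Record csdef := CSDef { csd_ann : formula; csd_name : string;
                        csd_members : list (formula * (typ * string)) }.
Record cfdef := CFDef { cfd_ann : formula; cfd_ret : typ; cfd_name : string;
                        cfd_params : list (formula * (typ * string));
                        cfd_body : cexp }.
Record cprog := CProg { cp_structs : list csdef; cp_funs : list cfdef }.

Fixpoint cfind_struct (l : list csdef) (s : string) : option csdef :=
  match l with
  | [::] => None
  | sd :: l' => if String.eqb (csd_name sd) s then Some sd else cfind_struct l' s
  end.

Fixpoint cfind_member (l : list (formula * (typ * string))) (m : string)
  : option (formula * typ) :=
  match l with
  | [::] => None
  | (a, (T, m')) :: l' => if String.eqb m' m then Some (a, T) else cfind_member l' m
  end.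

Fixpoint cfind_fun (l : list cfdef) (f : string) : option cfdef :=
  match l with
  | [::] => None
  | fd :: l' => if String.eqb (cfd_name fd) f then Some fd else cfind_fun l' f
  end.

Definition cprog_wf (Prg : cprog) : Prop :=
  List.NoDup (map csd_name (cp_structs Prg)) /\
  List.NoDup (map cfd_name (cp_funs Prg)) /\
  (forall sd, List.In sd (cp_structs Prg) ->
     List.NoDup (map (fun d => d.2.2) (csd_members sd))) /\
  (forall fd, List.In fd (cp_funs Prg) ->
     List.NoDup (map (fun d => d.2.2) (cfd_params fd))).

Definition typ_structs (T : typ) : list string :=
  match T with Tstruct s => [:: s] | _ => [::] end.

Fixpoint cexp_structs (e : cexp) : list string :=
  match e with
  | CNum _ | CNull | CVar _ => [::]
  | CApp _ args =>
      (fix go (l : list (formula * cexp)) : list string :=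
         match l with [::] => [::] | (_, e') :: l' => cexp_structs e' ++ go l' end) args
  | CMember e0 _ => cexp_structs e0
  | CAssign e0 _ e1 => cexp_structs e0 ++ cexp_structs e1
  | CCond e0 e1 e2 => cexp_structs e0 ++ cexp_structs e1 ++ cexp_structs e2
  | CSeq es =>
      (fix go (l : list (formula * cexp)) : list string :=
         match l with [::] => [::] | (_, e') :: l' => cexp_structs e' ++ go l' end) es
  | CUop _ e0 => cexp_structs e0
  | CBop _ e1 e2 => cexp_structs e1 ++ cexp_structs e2
  | CMalloc s => [:: s]
  | CMfree e0 => cexp_structs e0
  end.

Fixpoint cexp_funs (e : cexp) : list string :=
  match e with
  | CNum _ | CNull | CVar _ | CMalloc _ => [::]
  | CApp f args =>
      f :: (fix go (l : list (formula * cexp)) : list string :=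
         match l with [::] => [::] | (_, e') :: l' => cexp_funs e' ++ go l' end) args
  | CMember e0 _ => cexp_funs e0
  | CAssign e0 _ e1 => cexp_funs e0 ++ cexp_funs e1
  | CCond e0 e1 e2 => cexp_funs e0 ++ cexp_funs e1 ++ cexp_funs e2
  | CSeq es =>
      (fix go (l : list (formula * cexp)) : list string :=
         match l with [::] => [::] | (_, e') :: l' => cexp_funs e' ++ go l' end) es
  | CUop _ e0 => cexp_funs e0
  | CBop _ e1 e2 => cexp_funs e1 ++ cexp_funs e2
  | CMfree e0 => cexp_funs e0
  end.

Definition prog_struct_occs (Prg : cprog) : list string :=
  flatten (map (fun sd => csd_name sd ::
                 flatten (map (fun d => typ_structs d.2.1) (csd_members sd)))
               (cp_structs Prg)) ++
  flatten (map (fun fd => typ_structs (cfd_ret fd) ++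
                 flatten (map (fun d => typ_structs d.2.1) (cfd_params fd)) ++
                 cexp_structs (cfd_body fd))
               (cp_funs Prg)).

Definition prog_fun_occs (Prg : cprog) : list string :=
  flatten (map (fun fd => cexp_funs (cfd_body fd)) (cp_funs Prg)).

Definition sane (Prg : cprog) : Prop :=
  (forall s, List.In s (prog_struct_occs Prg) ->
     exists sd, cfind_struct (cp_structs Prg) s = Some sd) /\
  (forall f, List.In f (prog_fun_occs Prg) ->
     exists fd, cfind_fun (cp_funs Prg) f = Some fd) /\
  (exists fd, cfind_fun (cp_funs Prg) "main"%string = Some fd /\
              cfd_ret fd = Tint /\ cfd_params fd = [::]).

Definition cdef (Prg : cprog) (s : string) : Prop :=
  exists sd, cfind_struct (cp_structs Prg) s = Some sd.

Definition at_typ (Prg : cprog) (T : typ) : formula :=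
  match T with
  | Tstruct s => match cfind_struct (cp_structs Prg) s with
                 | Some sd => csd_ann sd | None => FFalse end
  | _ => FTrue
  end.

Definition cenv := list (string * typ * formula).

(* neverLast(i, (e_1..e_n)), with 0-based index i *)
Definition never_last (i : nat) (es : list (formula * cexp)) : formula :=
  let anns := map fst es in
  FOr (FNot (nth FTrue anns i)) (fors (drop i.+1 anns)).

(* Family-based typing derivations (proof-relevant, so that one can speak
   of the judgments occurring in a derivation). *)
Section FT.
Variable Prg : cprog.
Variable Delta : cenv.

Inductive ft : formula -> cexp -> typ -> Type :=
| FT_int th n : ft th (CNum n) Tint
| FT_null th : ft th CNull Tvoid
| FT_par th x T psi :
    List.In (x, T, psi) Delta -> entails th psi -> ft th (CVar x) T
| FT_app th f args fd :
    cfind_fun (cp_funs Prg) f = Some fd ->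
    entails th (cfd_ann fd) ->
    ft_args th args (cfd_params fd) ->
    ft th (CApp f args) (cfd_ret fd)
| FT_member th e0 s m T sd a :
    ft th e0 (Tstruct s) ->
    cfind_struct (cp_structs Prg) s = Some sd ->
    cfind_member (csd_members sd) m = Some (a, T) ->
    entails th a ->
    ft th (CMember e0 m) T
| FT_assign th e0 s m e1 T T1 sd a :
    ft th e0 (Tstruct s) ->
    cfind_struct (cp_structs Prg) s = Some sd ->
    cfind_member (csd_members sd) m = Some (a, T) ->
    entails th a ->
    ft th e1 T1 ->
    subty (cdef Prg) T1 T ->
    ft th (CAssign e0 m e1) T
| FT_cond th e0 e1 e2 T0 T1 T2 T3 :
    ft th e0 T0 -> ft th e1 T1 -> ft th e2 T2 ->
    tmax (cdef Prg) T1 T2 T3 ->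
    ft th (CCond e0 e1 e2) T3
| FT_seq th es Ts T :
    entails th (fors (map fst es)) ->
    ft_seq th es (rcons Ts T) ->
    (forall i, (i < size es)%N -> nth Tint (rcons Ts T) i <> T ->
               entails th (never_last i es)) ->
    ft th (CSeq es) T
| FT_uop th u e0 T0 :
    ft th e0 T0 -> uop_ty u T0 -> ft th (CUop u e0) Tint
| FT_bop th b e1 e2 T1 T2 T3 :
    ft th e1 T1 -> ft th e2 T2 ->
    tmax (cdef Prg) T1 T2 T3 -> bop_ty b T3 ->
    ft th (CBop b e1 e2) Tint
| FT_malloc th s sd :
    cfind_struct (cp_structs Prg) s = Some sd ->
    entails th (csd_ann sd) ->
    ft th (CMalloc s) (Tstruct s)
| FT_mfree th e0 s :
    ft th e0 (Tstruct s) -> ft th (CMfree e0) Tvoid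
with ft_args : formula -> list (formula * cexp) ->
               list (formula * (typ * string)) -> Type :=
| FA_nil th : ft_args th [::] [::]
| FA_cons th a e args pa T x ps T' :
    ft th e T' -> subty (cdef Prg) T' T -> entails th (fiff a pa) ->
    ft_args th args ps ->
    ft_args th ((a, e) :: args) ((pa, (T, x)) :: ps)
with ft_seq : formula -> list (formula * cexp) -> list typ -> Type :=
| FS_nil th : ft_seq th [::] [::]
| FS_cons th a e es T Ts :
    ft (FAnd th a) e T -> ft_seq th es Ts ->
    ft_seq th ((a, e) :: es) (T :: Ts).

Fixpoint occ th e T (d : ft th e T) (J : formula * cexp * typ) {struct d} : Prop :=
  J = (th, e, T) \/
  match d with
  | FT_int _ _ => False
  | FT_null _ => False
  | FT_par _ _ _ _ _ _ => False
  | FT_app _ _ _ _ _ _ da => occ_args da J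
  | FT_member _ _ _ _ _ _ _ d0 _ _ _ => occ d0 J
  | FT_assign _ _ _ _ _ _ _ _ _ d0 _ _ _ d1 _ => occ d0 J \/ occ d1 J
  | FT_cond _ _ _ _ _ _ _ _ d0 d1 d2 _ => occ d0 J \/ occ d1 J \/ occ d2 J
  | FT_seq _ _ _ _ _ ds _ => occ_seq ds J
  | FT_uop _ _ _ _ d0 _ => occ d0 J
  | FT_bop _ _ _ _ _ _ _ d1 d2 _ _ => occ d1 J \/ occ d2 J
  | FT_malloc _ _ _ _ _ => False
  | FT_mfree _ _ _ d0 => occ d0 J
  end
with occ_args th args ps (d : ft_args th args ps) (J : formula * cexp * typ)
  {struct d} : Prop :=
  match d with
  | FA_nil _ => False
  | FA_cons _ _ _ _ _ _ _ _ _ d1 _ _ dr => occ d1 J \/ occ_args dr J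
  end
with occ_seq th es Ts (d : ft_seq th es Ts) (J : formula * cexp * typ)
  {struct d} : Prop :=
  match d with
  | FS_nil _ => False
  | FS_cons _ _ _ _ _ _ d1 dr => occ d1 J \/ occ_seq dr J
  end.

End FT.

Definition delta_of (fd : cfdef) : cenv :=
  map (fun d => (d.2.2, d.2.1, d.1)) (cfd_params fd).

Inductive ft_fun (Prg : cprog) (th : formula) (fd : cfdef) : Type :=
| FTFun :
    entails th (at_typ Prg (cfd_ret fd)) ->
    (forall a T x, List.In (a, (T, x)) (cfd_params fd) ->
       entails th (fimp a (at_typ Prg T))) ->
    forall T', ft Prg (delta_of fd) th (cfd_body fd) T' ->
    subty (cdef Prg) T' (cfd_ret fd) ->
    ft_fun Prg th fd.

Definition struct_ok (Prg : cprog) (th : formula) (sd : csdef) : Prop :=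
  forall a T m, List.In (a, (T, m)) (csd_members sd) ->
    entails th (fimp a (at_typ Prg T)).

Record ft_prg (Prg : cprog) (phi : formula) : Type := FTPrg {
  fp_sane : sane Prg;
  fp_main : forall fd, cfind_fun (cp_funs Prg) "main"%string = Some fd ->
                       cfd_ann fd = FTrue;
  fp_structs : forall sd, List.In sd (cp_structs Prg) ->
                 struct_ok Prg (FAnd phi (csd_ann sd)) sd;
  fp_funs : forall fd, List.In fd (cp_funs Prg) ->
                 ft_fun Prg (FAnd phi (cfd_ann fd)) fd
}.

Definition occ_fun (Prg : cprog) th fd (d : ft_fun Prg th fd)
  (th' : formula) (Dl : cenv) (e : cexp) (T : typ) : Prop :=
  match d with
  | FTFun _ _ _ db _ => Dl = delta_of fd /\ occ db (th', e, T)
  end.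

Definition occurs_in_prg (Prg : cprog) (phi : formula) (D : ft_prg Prg phi)
  (th : formula) (Dl : cenv) (e : cexp) (T : typ) : Prop :=
  exists fd (H : List.In fd (cp_funs Prg)), occ_fun (@fp_funs Prg phi D fd H) th Dl e T.

Fixpoint vexp (p : {set F}) (e : cexp) : exp :=
  match e with
  | CNum n => ENum n
  | CNull => ENull
  | CVar x => EVar x
  | CApp f args =>
      EApp f ((fix go (l : list (formula * cexp)) : list exp :=
                 match l with
                 | [::] => [::]
                 | (a, e') :: l' => if eval p a then vexp p e' :: go l' else go l'
                 end) args)
  | CMember e0 m => EMember (vexp p e0) m
  | CAssign e0 m e1 => EAssign (vexp p e0) m (vexp p e1)
  | CCond e0 e1 e2 => ECond (vexp p e0) (vexp p e1) (vexp p e2)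
  | CSeq es =>
      ESeq ((fix go (l : list (formula * cexp)) : list exp :=
               match l with
               | [::] => [::]
               | (a, e') :: l' => if eval p a then vexp p e' :: go l' else go l'
               end) es)
  | CUop u e0 => EUop u (vexp p e0)
  | CBop b e1 e2 => EBop b (vexp p e1) (vexp p e2)
  | CMalloc s => EMalloc s
  | CMfree e0 => EMfree (vexp p e0)
  end.

Definition vstruct (p : {set F}) (sd : csdef) : sdef :=
  SDef (csd_name sd) (map snd (filter (fun d => eval p d.1) (csd_members sd))).

Definition vfun (p : {set F}) (fd : cfdef) : fdef :=
  FDef (cfd_ret fd) (cfd_name fd)
       (map snd (filter (fun d => eval p d.1) (cfd_params fd)))
       (vexp p (cfd_body fd)).

Definition vprog (p : {set F}) (Prg : cprog) : lprog :=
  LProg (map (vstruct p) (filter (fun sd => eval p (csd_ann sd)) (cp_structs Prg)))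
        (map (vfun p) (filter (fun fd => eval p (cfd_ann fd)) (cp_funs Prg))).

Definition venv (p : {set F}) (Dl : cenv) : list (string * typ) :=
  map (fun d => (d.1.1, d.1.2)) (filter (fun d => eval p d.2) Dl).

Definition present (p : {set F}) (Prg : cprog) (s : string) : Prop :=
  exists sd, cfind_struct (cp_structs Prg) s = Some sd /\ eval p (csd_ann sd).

End CLC.

From Stdlib Require Import String.
From Stdlib Require List.
From mathcomp Require Import all_boot.

Set Implicit Arguments.
Unset Strict Implicit.

(** Fix a valid product [p]. Evaluated at [p], each side condition
    [theta |= psi] of a family-based rule says that the function, member,
    struct or parameter the rule relies on survives in the variant; the [<=>]
    condition on arguments keeps the surviving arguments aligned with the
    surviving parameters, and [neverLast] says that the last surviving element
    of a sequence has the type of the whole sequence. A judgment occurring inside the derivation of a function body is the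
    conclusion of a subderivation whose context entails that of the body, so
    [p] also enables the function, hence the types of its enabled parameters
    are present. *)

Lemma Forall2_map_l (A A' B : Type) (f : A -> A') (R : A' -> B -> Prop) l Ts :
  List.Forall2 (fun a t => R (f a) t) l Ts -> List.Forall2 R (map f l) Ts.
Proof. by elim=> //= a t l' Ts' Hat _ IH; constructor. Qed.

Lemma Forall2_rcons_last (A B : Type) (R : A -> B -> Prop) l Ts T :
  List.Forall2 R l (rcons Ts T) -> exists x, R x T.
Proof. by elim: Ts l => [|t Ts IH] l /= H; inversion H; subst; eauto. Qed.

Lemma filter_hasN (A : Type) (b : pred A) (l : seq A) :
  ~~ has b l -> filter b l = [::].
Proof. by rewrite has_count -eqn0Ngt -size_filter => /eqP/size0nil. Qed.

Lemma Forall2_filter_rcons (A B : Type) (b : pred A) (R : A -> B -> Prop)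
    (x0 : A) (t0 : B) (l : seq A) (Ts : seq B) (T : B) :
  List.Forall2 (fun x t => b x -> R x t) l Ts ->
  has b l ->
  (forall i, i < size l -> b (nth x0 l i) -> ~~ has b (drop i.+1 l) ->
             nth t0 Ts i = T) ->
  exists Ts', List.Forall2 R (filter b l) (rcons Ts' T).
Proof.
elim=> [|x t l' Ts' Hxt _ IH] //= Hhas Hlast.
case Hhas': (has b l').
  have [Ts'' HR] := IH Hhas' (fun i => Hlast i.+1).
  by case Hx: (b x); [exists (t :: Ts''); constructor; auto | exists Ts''].
have Hx : b x by move: Hhas; rewrite Hhas' orbF.
have <- : t = T by apply: (Hlast 0); rewrite //= drop0 Hhas'.
by rewrite Hx filter_hasN ?Hhas' //; exists [::]; constructor; auto.
Qed.

Definition typ_eq_dec (T1 T2 : typ) : {T1 = T2} + {T1 <> T2}.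
Proof. decide equality; exact: string_dec. Defined.

Lemma cfind_fun_in (F : finType) (l : seq (cfdef F)) f fd :
  cfind_fun l f = Some fd -> List.In fd l.
Proof. by elim: l => //= fd' l IH; case: String.eqb => [[->]|/IH]; auto. Qed.

Lemma cfind_struct_in (F : finType) (l : seq (csdef F)) s sd :
  cfind_struct l s = Some sd -> List.In sd l.
Proof. by elim: l => //= sd' l IH; case: String.eqb => [[->]|/IH]; auto. Qed.

Lemma cfind_member_in (F : finType) (l : seq (formula F * (typ * string))) m a T :
  cfind_member l m = Some (a, T) -> List.In (a, (T, m)) l.
Proof.
elim: l => //= [[a' [T' m']]] l IH.
case E: (String.eqb m' m); last by move/IH; right.
by move/String.eqb_eq: E => -> [-> ->]; left.
Qed.

Section Variant.
Variables (F : finType) (p : {set F}).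

Lemma eval_fors (l : seq (formula F)) : eval p (fors l) = has (eval p) l.
Proof. by elim: l => //= a l ->. Qed.

Lemma eval_never_last (es : seq (formula F * cexp F)) i :
  i < size es ->
  eval p (never_last i es) =
  ~~ eval p (nth (FTrue F, CNull F) es i).1 || has (fun d => eval p d.1) (drop i.+1 es).
Proof.
by move=> Hi; rewrite /= eval_fors (nth_map (FTrue F, CNull F)) // -map_drop has_map.
Qed.

Lemma vexp_app f (args : seq (formula F * cexp F)) :
  vexp p (CApp f args) =
  EApp f (map (fun d => vexp p d.2) (filter (fun d => eval p d.1) args)).
Proof.
elim: args => [|[a e] args /= [IH]] //=.
by case: (eval p a); rewrite /= IH.
Qed.

Lemma vexp_seq (es : seq (formula F * cexp F)) :
  vexp p (CSeq es) =
  ESeq (map (fun d => vexp p d.2) (filter (fun d => eval p d.1) es)).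
Proof.
elim: es => [|[a e] es /= [IH]] //=.
by case: (eval p a); rewrite /= IH.
Qed.

Lemma find_fun_vprog (l : seq (cfdef F)) f fd :
  cfind_fun l f = Some fd -> eval p (cfd_ann fd) ->
  find_fun (map (vfun p) (filter (fun fd => eval p (cfd_ann fd)) l)) f
  = Some (vfun p fd).
Proof.
elim: l => //= fd' l IH; case E: (String.eqb (cfd_name fd') f).
  by move=> [<-] ->; rewrite /= E.
by move=> Hf Hann; case: (eval p _); rewrite /= ?E; apply: IH.
Qed.

Lemma find_struct_vprog (l : seq (csdef F)) s sd :
  cfind_struct l s = Some sd -> eval p (csd_ann sd) ->
  find_struct (map (vstruct p) (filter (fun sd => eval p (csd_ann sd)) l)) s
  = Some (vstruct p sd).
Proof.
elim: l => //= sd' l IH; case E: (String.eqb (csd_name sd') s).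
  by move=> [<-] ->; rewrite /= E.
by move=> Hs Hann; case: (eval p _); rewrite /= ?E; apply: IH.
Qed.

Lemma find_member_vstruct (l : seq (formula F * (typ * string))) m a T :
  cfind_member l m = Some (a, T) -> eval p a ->
  find_member (map snd (filter (fun d => eval p d.1) l)) m = Some T.
Proof.
elim: l => //= [[a' [T' m']]] l IH.
case E: (String.eqb m' m).
  by move=> [-> ->] ->; rewrite /= E.
by move=> Hm Ha; case: (eval p a'); rewrite /= ?E; apply: IH.
Qed.

Lemma venv_in (Dl : cenv F) x T psi :
  List.In (x, T, psi) Dl -> eval p psi -> List.In (x, T) (venv p Dl).
Proof.
move=> Hin Hpsi.
exact: (List.in_map (fun d : string * typ * formula F => (d.1.1, d.1.2))
          _ _ (proj2 (List.filter_In _ _ _) (conj Hin Hpsi))).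
Qed.

Lemma never_last_last_enabled (es : seq (formula F * cexp F)) (Ts : seq typ) T :
  (forall i, i < size es -> nth Tint Ts i <> T -> eval p (never_last i es)) ->
  forall i, i < size es -> eval p (nth (FTrue F, CNull F) es i).1 ->
  ~~ has (fun d => eval p d.1) (drop i.+1 es) -> nth Tint Ts i = T.
Proof.
move=> Hnl i Hi Hx Hrest; case: (typ_eq_dec (nth Tint Ts i) T) => // Hne.
by move: (Hnl i Hi Hne); rewrite eval_never_last // Hx (negbTE Hrest).
Qed.

End Variant.

Scheme ft_ind' := Induction for ft Sort Prop
  with ft_args_ind' := Induction for ft_args Sort Prop
  with ft_seq_ind' := Induction for ft_seq Sort Prop.

Section Occurrence.
Variables (F : finType) (Prg : cprog F) (Dl : cenv F).

Definition subderivation (th : formula F) (J : formula F * cexp F * typ) :=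
  entails J.1.1 th /\ inhabited (ft Prg Dl J.1.1 J.1.2 J.2).

Lemma occ_subderivation th e T (d : ft Prg Dl th e T) J :
  occ d J -> subderivation th J.
Proof.
pose P0 th args ps (d : ft_args Prg Dl th args ps) :=
  forall J, occ_args d J -> subderivation th J.
pose P1 th es Ts (d : ft_seq Prg Dl th es Ts) :=
  forall J, occ_seq d J -> subderivation th J.
move: J; apply: (@ft_ind' F Prg Dl (fun th e T d => forall J, occ d J -> subderivation th J) P0 P1)
  => [th0 n|th0|th0 x T0 psi Hin Hpsi|th0 f args fd Hf Hann da IHa
     |th0 e0 s m T0 sd a d0 IH0 Hs Hm Ha|th0 e0 s m e1 T0 T1 sd a d0 IH0 Hs Hm Ha d1 IH1 Hsub
     |th0 e0 e1 e2 T0 T1 T2 T3 d0 IH0 d1 IH1 d2 IH2 Hmax|th0 es Ts T0 Hhas ds IHs Hlast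
     |th0 u e0 T0 d0 IH0 Hu|th0 b e1 e2 T1 T2 T3 d1 IH1 d2 IH2 Hmax Hb|th0 s sd Hs Hann
     |th0 e0 s d0 IH0|th0|th0 a e0 args pa T0 x ps T' d0 IH0 Hsub Hiff da IHa|th0
     |th0 a e0 es T0 Ts d0 IH0 ds IHs] J /=;
  try (case=> [->|]; first by split=> //; constructor; econstructor; eauto).
all: try by [case | move/IH0 | move/IHa | move/IHs | case=> [/IH0|/IH1]
            | case=> [/IH1|/IH2] | case=> [/IH0|[/IH1|/IH2]] | case=> [/IH0|/IHa]].
by case=> [/IH0 [HJ ?]|/IHs //]; split=> // q /HJ /andP[].
Qed.

End Occurrence.

Section Presence.
Variables (F : finType) (p : {set F}) (Prg : cprog F).

Definition env_present (Dl : cenv F) : Prop :=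
  forall x T psi, List.In (x, T, psi) Dl -> eval p psi -> okT (present p Prg) T.

Lemma venv_present Dl x T :
  env_present Dl -> List.In (x, T) (venv p Dl) -> okT (present p Prg) T.
Proof.
move=> HDl /List.in_map_iff [[[x' T'] psi] [Heq /List.filter_In [Hin Hpsi]]].
by case: Heq => _ <-; apply: HDl Hin Hpsi.
Qed.

Lemma at_typ_present T : eval p (at_typ Prg T) -> okT (present p Prg) T.
Proof. by case: T => //= s; case E: cfind_struct => [sd|] //= Hsd; exists sd. Qed.

Lemma present_struct_defined s :
  present p Prg s -> struct_defined (vprog p Prg) s.
Proof. by move=> [sd [Hs Hann]]; exists (vstruct p sd); apply: find_struct_vprog. Qed.

Lemma subty_vprog T1 T2 :
  subty (cdef Prg) T1 T2 -> okT (present p Prg) T2 ->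
  subty (struct_defined (vprog p Prg)) T1 T2.
Proof.
move=> [->|[-> [s [-> _]]]] HT2; first by left.
by right; split=> //; exists s; split=> //; apply: present_struct_defined.
Qed.

Lemma tmax_vprog T1 T2 T3 :
  tmax (cdef Prg) T1 T2 T3 -> okT (present p Prg) T1 -> okT (present p Prg) T2 ->
  tmax (struct_defined (vprog p Prg)) T1 T2 T3 /\ okT (present p Prg) T3.
Proof.
by move=> [[Hsub ->]|[Hsub ->]] HT1 HT2; split=> //; [left|right];
  split=> //; apply: subty_vprog.
Qed.

Lemma ft_fun_signature_present th fd :
  ft_fun Prg th fd -> eval p th ->
  okT (present p Prg) (cfd_ret fd) /\
  (forall a T x, List.In (a, (T, x)) (cfd_params fd) -> eval p a ->
                 okT (present p Prg) T).
Proof.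
case=> Hret Hpar _ _ _ Hth; split; first exact/at_typ_present/Hret.
by move=> a T x Hin Ha; apply: at_typ_present; move: (Hpar _ _ _ Hin p Hth); rewrite /= Ha.
Qed.

Lemma delta_of_present th fd :
  ft_fun Prg th fd -> eval p th -> env_present (delta_of fd).
Proof.
move=> Hfd Hth x T psi /List.in_map_iff [[a [T' x']] [Heq Hin]].
by case: Heq => _ <- <-; apply: (ft_fun_signature_present Hfd Hth).2 Hin.
Qed.

Lemma struct_ok_member_present th sd a T m :
  struct_ok Prg th sd -> eval p th -> List.In (a, (T, m)) (csd_members sd) ->
  eval p a -> okT (present p Prg) T.
Proof.
by move=> Hsd Hth Hin Ha; apply: at_typ_present; move: (Hsd _ _ _ Hin p Hth); rewrite /= Ha.
Qed.

End Presence.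

Section Soundness.
Variables (F : finType) (Prg : cprog F) (phi : formula F) (D : ft_prg Prg phi).
Variables (p : {set F}) (ok : string -> Prop) (Dl : cenv F).
Hypothesis p_phi : eval p phi.
Hypothesis present_ok : forall s, present p Prg s -> ok s.
Hypothesis Dl_present : env_present p Prg Dl.

Lemma okT_present_ok T : okT (present p Prg) T -> okT ok T.
Proof. by case: T => //= s /present_ok. Qed.

Lemma fun_signature_present f fd :
  cfind_fun (cp_funs Prg) f = Some fd -> eval p (cfd_ann fd) ->
  okT (present p Prg) (cfd_ret fd) /\
  (forall a T x, List.In (a, (T, x)) (cfd_params fd) -> eval p a ->
                 okT (present p Prg) T).
Proof.
move=> Hf Hann; apply: (ft_fun_signature_present (fp_funs D (cfind_fun_in Hf))).
by rewrite /= p_phi Hann.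
Qed.

Lemma vparams_ok fd :
  (forall a T x, List.In (a, (T, x)) (cfd_params fd) -> eval p a ->
                 okT (present p Prg) T) ->
  List.Forall (okT ok) (map fst (fd_params (vfun p fd))).
Proof.
move=> Hpar; apply/List.Forall_forall => T /List.in_map_iff [[T' x] [/= <-]].
move=> /List.in_map_iff [[a [T'' x']] [[<- _]]] /List.filter_In [Hin Ha].
exact/okT_present_ok/(Hpar _ _ _ Hin Ha).
Qed.

Lemma member_vprog s sd m a T :
  present p Prg s -> cfind_struct (cp_structs Prg) s = Some sd ->
  cfind_member (csd_members sd) m = Some (a, T) -> eval p a ->
  [/\ find_struct (lp_structs (vprog p Prg)) s = Some (vstruct p sd),
      find_member (sd_members (vstruct p sd)) m = Some T
    & okT (present p Prg) T].
Proof.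
move=> [sd' [Hs' Hann]]; rewrite Hs' => -[<-] Hm Ha.
split; [exact: find_struct_vprog | exact: find_member_vstruct Hm Ha |].
apply: struct_ok_member_present (fp_structs D (cfind_struct_in Hs')) _
         (cfind_member_in Hm) Ha.
by rewrite /= p_phi Hann.
Qed.

Definition typed_variant (e : cexp F) (T : typ) : Prop :=
  lc_ty (vprog p Prg) (venv p Dl) ok (vexp p e) T /\ okT (present p Prg) T.

Lemma typed_variant_app f args fd Ts :
  cfind_fun (cp_funs Prg) f = Some fd -> eval p (cfd_ann fd) ->
  List.Forall2 (lc_ty (vprog p Prg) (venv p Dl) ok)
    (map (fun d => vexp p d.2) (filter (fun d => eval p d.1) args)) Ts ->
  List.Forall2 (subty (struct_defined (vprog p Prg))) Ts
    (map fst (fd_params (vfun p fd))) ->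
  typed_variant (CApp f args) (cfd_ret fd).
Proof.
move=> Hf Hann Hargs Hsub; have [Hret Hpar] := fun_signature_present Hf Hann.
split=> //; rewrite vexp_app.
apply: (T_app (fd := vfun p fd)) Hargs Hsub (vparams_ok Hpar) (okT_present_ok Hret).
exact: find_fun_vprog.
Qed.

Lemma typed_variant_seq es Ts T :
  List.Forall2 (fun d t => eval p d.1 -> typed_variant d.2 t) es (rcons Ts T) ->
  has (fun d => eval p d.1) es ->
  (forall i, i < size es -> nth Tint (rcons Ts T) i <> T ->
             eval p (never_last i es)) ->
  typed_variant (CSeq es) T.
Proof.
move=> Hes Hhas Hnl.
have [Ts' Hvar] := Forall2_filter_rcons Hes Hhas (never_last_last_enabled Hnl).
have [_ [_ HT]] := Forall2_rcons_last Hvar.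
split=> //; rewrite vexp_seq; apply: (T_seq (Ts := Ts')); last exact: okT_present_ok.
by apply: Forall2_map_l; apply: List.Forall2_impl Hvar => ? ? [].
Qed.

Definition args_typed_variant th
    (args : seq (formula F * cexp F)) (ps : seq (formula F * (typ * string))) :=
  eval p th ->
  (forall a T x, List.In (a, (T, x)) ps -> eval p a -> okT (present p Prg) T) ->
  exists Ts,
    List.Forall2 (lc_ty (vprog p Prg) (venv p Dl) ok)
      (map (fun d => vexp p d.2) (filter (fun d => eval p d.1) args)) Ts /\
    List.Forall2 (subty (struct_defined (vprog p Prg))) Ts
      (map fst (map snd (filter (fun d => eval p d.1) ps))).

Definition seq_typed_variant th (es : seq (formula F * cexp F)) (Ts : seq typ) :=
  eval p th -> List.Forall2 (fun d t => eval p d.1 -> typed_variant d.2 t) es Ts.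

Lemma args_typed_variant_cons th a e args pa T x ps T' :
  (eval p th -> typed_variant e T') -> subty (cdef Prg) T' T ->
  entails th (fiff a pa) -> args_typed_variant th args ps ->
  args_typed_variant th ((a, e) :: args) ((pa, (T, x)) :: ps).
Proof.
move=> He Hsub Hiff Hargs Hth Hpar.
have Hpa : eval p a = eval p pa.
  by move: (Hiff p Hth); rewrite /=; case: (eval p a); case: (eval p pa).
have [Ts [HTs Hsubs]] := Hargs Hth (fun a' T'' x' Hin => Hpar a' T'' x' (or_intror Hin)).
rewrite /= -Hpa; case Ha: (eval p a) => /=; last by exists Ts.
have [He' _] := He Hth.
have HT : okT (present p Prg) T by apply: (Hpar pa T x); [left | rewrite -Hpa].
by exists (T' :: Ts); split; constructor=> //; apply: subty_vprog.
Qed.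

Lemma ft_typed_variant th e T (d : ft Prg Dl th e T) :
  eval p th -> typed_variant e T.
Proof.
move: d; apply: (@ft_ind' F Prg Dl (fun th e T _ => eval p th -> typed_variant e T)
                   (fun th args ps _ => args_typed_variant th args ps)
                   (fun th es Ts _ => seq_typed_variant th es Ts))
  => [th0 n|th0|th0 x T0 psi Hin Hpsi|th0 f args fd Hf Hann da IHa
     |th0 e0 s m T0 sd a d0 IH0 Hs Hm Ha|th0 e0 s m e1 T0 T1 sd a d0 IH0 Hs Hm Ha d1 IH1 Hsub
     |th0 e0 e1 e2 T0 T1 T2 T3 d0 IH0 d1 IH1 d2 IH2 Hmax|th0 es Ts T0 Hhas ds IHs Hlast
     |th0 u e0 T0 d0 IH0 Hu|th0 b e1 e2 T1 T2 T3 d1 IH1 d2 IH2 Hmax Hb|th0 s sd Hs Hann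
     |th0 e0 s d0 IH0|th0|th0 a e0 args pa T0 x ps T' d0 IH0 Hsub Hiff da IHa|th0
     |th0 a e0 es T0 Ts d0 IH0 ds IHs] Hth.
- by split; constructor.
- by split; constructor.
- have HT := Dl_present Hin (Hpsi p Hth).
  by split=> //; constructor; [apply: venv_in Hin (Hpsi p Hth) | apply: okT_present_ok].
- have [_ Hpar] := fun_signature_present Hf (Hann p Hth).
  have [Ts [Hargs Hsub]] := IHa Hth Hpar.
  exact: typed_variant_app Hf (Hann p Hth) Hargs Hsub.
- have [He0 Hs0] := IH0 Hth.
  have [Hs' Hm' HT] := member_vprog Hs0 Hs Hm (Ha p Hth).
  by split=> //; apply: T_member He0 Hs' Hm' (okT_present_ok HT).
- have [He0 Hs0] := IH0 Hth; have [He1 _] := IH1 Hth.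
  have [Hs' Hm' HT] := member_vprog Hs0 Hs Hm (Ha p Hth).
  split=> //; apply: T_assign He0 Hs' Hm' He1 _ (okT_present_ok HT).
  exact: subty_vprog.
- have [He0 _] := IH0 Hth; have [He1 HT1] := IH1 Hth; have [He2 HT2] := IH2 Hth.
  have [Hmax' HT3] := tmax_vprog Hmax HT1 HT2.
  by split=> //; apply: T_cond He0 He1 He2 Hmax' (okT_present_ok HT3).
- apply: typed_variant_seq (IHs Hth) _ (fun i Hi Hne => Hlast i Hi Hne p Hth).
  by move: (Hhas p Hth); rewrite eval_fors has_map.
- by have [He0 _] := IH0 Hth; split=> //; apply: T_uop He0 Hu.
- have [He1 HT1] := IH1 Hth; have [He2 HT2] := IH2 Hth.
  have [Hmax' _] := tmax_vprog Hmax HT1 HT2.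
  by split=> //; apply: T_bop He1 He2 Hmax' Hb.
- have Hpresent : present p Prg s by exists sd; split=> //; apply: Hann.
  by split=> //; constructor; [apply: present_struct_defined | apply: present_ok].
- by have [He0 _] := IH0 Hth; split=> //; apply: T_mfree He0.
- by exists [::].
- exact: args_typed_variant_cons IH0 Hsub Hiff IHa Hth.
- by [].
- constructor; last exact: IHs.
  by move=> Ha; apply: IH0; rewrite /= Hth.
Qed.

End Soundness.

Theorem theorem3 (F : finType) (phi : formula F) (Prg : cprog F)
  (p : {set F}) (D : ft_prg Prg phi)
  (th : formula F) (Dl : cenv F) (e : cexp F) (T : typ) :
  cprog_wf Prg ->
  eval p phi ->
  occurs_in_prg D th Dl e T ->
  eval p th ->
  lc_ty (vprog p Prg) (venv p Dl) (fun _ => True) (vexp p e) T /\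
  (lc_ty (vprog p Prg) (venv p Dl) (present p Prg) (vexp p e) T /\
   (forall x T', List.In (x, T') (venv p Dl) -> okT (present p Prg) T')).
Proof.
move=> _ p_phi [fd [Hin Hocc]] Hth.
have Hfd := fp_funs D Hin.
move: Hocc; rewrite /occ_fun; case: (fp_funs D Hin) => _ _ T0 db _ [-> Hocc].
have [Hroot [d]] := occ_subderivation Hocc.
have HDl := delta_of_present Hfd (Hroot p Hth).
have [Hall _] := ft_typed_variant D (ok := fun _ => True) p_phi (fun _ _ => I) HDl d Hth.
have [Hpresent _] := ft_typed_variant D p_phi (fun _ Hs => Hs) HDl d Hth.
by split=> //; split=> // x T'; apply: venv_present HDl.
Qed.
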